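(* Assume (A1), (A2) and (A4) of the context, and let the chain $(\bar z_k)_{k\ge0}$ start from an arbitrary initial distribution. For $n\ge1$ let $$\Sigma_n=\frac1n\sum_{k=1}^nG^{-1}\mathsf E\big[(g(\bar z_k)-\bar{\mathrm P}g(\bar z_{k-1}))(g(\bar z_k)-\bar{\mathrm P}g(\bar z_{k-1}))^\top\big]G^{-\top}.$$ Then, with an absolute constant $C$, $$\|\Sigma_n-\Sigma_\infty\|_{\mathrm{ch}}\le C\,\frac{\|G^{-1}\|_\infty^2\,t_{\mathrm{mix}}^3}{n(1-\gamma)^2}.$$
   Context: Finite $\mathcal S,\mathcal A$, $d=|\mathcal S||\mathcal A|$. (A1) deterministic reward $r\in[0,1]$, discount $\gamma\in(0,1)$, kernel $\mathrm P$; $Q^\star$ optimal, $V^\star(s)=\max_aQ^\star(s,a)$. Behavior policy $\pi_b$; $\mu$ stationary law of $(s_t,a_t)$ (with $\min\mu>0$), $D_\mu=\operatorname{diag}(\mu)$; $\bar z_t=(s_t,a_t,s_{t+1})$ is Markov on $\mathsf X=\mathcal S\times\mathcal A\times\mathcal S$ with kernel $\bar{\mathrm P}((s_2,a_2,s_2')\mid(s_1,a_1,s_1'))=\mathbf 1\{s_2=s_1'\}\pi_b(a_2\mid s_2)\mathrm P(s_2'\mid s_2,a_2)$, stationary law $\bar\mu$. (A2) $d_{\mathrm{tv}}(\bar{\mathrm P}^t(\cdot\mid x),\bar\mu)\le(1/4)^{\lfloor t/t_{\mathrm{mix}}\rfloor}$. (A4) unique optimal deterministic policy $\pi^\star$ with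 positive optimality gap. $\mathrm P^{\pi^\star}((s,a),(s',a'))=\mathrm P(s'\mid s,a)\mathbf 1\{a'=\pi^\star(s')\}$, $G=D_\mu(I-\gamma\mathrm P^{\pi^\star})$. Bellman noise $\boldsymbol\varepsilon(s,a,s')=e_{s,a}(r(s,a)+\gamma V^\star(s')-Q^\star(s,a))$; $g=\sum_{k\ge0}\bar{\mathrm P}^k\boldsymbol\varepsilon$ solves $g-\bar{\mathrm P}g=\boldsymbol\varepsilon$. $\Sigma_{\boldsymbol\varepsilon}=\mathsf E_{\bar\mu}[\boldsymbol\varepsilon_0\boldsymbol\varepsilon_0^\top]+\sum_{\ell\ge1}(\mathsf E_{\bar\mu}[\boldsymbol\varepsilon_0\boldsymbol\varepsilon_\ell^\top]+\mathsf E_{\bar\mu}[\boldsymbol\varepsilon_\ell\boldsymbol\varepsilon_0^\top])$ (long-run covariance along the stationary chain, $\boldsymbol\varepsilon_\ell=\boldsymbol\varepsilon(\bar z_\ell)$), $\Sigma_\infty=G^{-1}\Sigma_{\boldsymbol\varepsilon}G^{-\top}$. $\|M\|_{\mathrm{ch}}=\max_{i,j}|M_{ij}|$; $\|G^{-1}\|_\infty$ is the induced $\ell_\infty$ operator norm. *)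

From HB Require Import structures.
From mathcomp Require Import all_boot all_order all_algebra.
From mathcomp Require Import all_classical all_reals all_analysis.
Set Implicit Arguments. Unset Strict Implicit. Unset Printing Implicit Defensive.
Import Order.TTheory GRing.Theory Num.Theory.
Local Open Scope ring_scope.

Section MDP.
Variables (R : realType) (S A : finType).

Definition SA := (S * A)%type.
Definition dim := #|{: SA}|.
Definition idx (i : 'I_dim) : SA := enum_val i.
Definition X := (S * A * S)%type.

(* maximum of a function over the finite type A (A nonempty in all uses) *)
Definition maxA (f : A -> R) : R :=
  match [pick a : A] with
  | Some a0 => \big[Num.max/f a0]_(a : A) f a
  | None => 0
  end.

Variables (r : S -> A -> R) (gamma : R) (P : S -> A -> S -> R)
          (pib : S -> A -> R) (mu : S -> A -> R) (Q : S -> A -> R)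
          (pistar : S -> A).

Definition Vstar (s : S) : R := maxA (Q s).

(* kernel of zbar_t = (s_t, a_t, s_{t+1}) *)
Definition Pbar (x y : X) : R :=
  let: (s1, a1, s1') := x in let: (s2, a2, s2') := y in
  (s2 == s1')%:R * pib s2 a2 * P s2 a2 s2'.

Fixpoint Pbar_pow (t : nat) (x y : X) : R :=
  match t with
  | 0 => (x == y)%:R
  | t'.+1 => \sum_(z : X) Pbar_pow t' x z * Pbar z y
  end.

Definition mubar (x : X) : R := let: (s, a, s') := x in mu s a * P s a s'.

Definition dtv (p q : X -> R) : R := 2^-1 * \sum_(y : X) `|p y - q y|.

Definition Ppistar (u v : SA) : R := P u.1 u.2 v.1 * (v.2 == pistar v.1)%:R.
Definition Gmx : 'M[R]_dim :=
  \matrix_(i, j) (mu (idx i).1 (idx i).2 *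
                  ((i == j)%:R - gamma * Ppistar (idx i) (idx j))).

Definition eps (x : X) : 'cV[R]_dim :=
  let: (s, a, s') := x in
  \col_i ((idx i == (s, a))%:R * (r s a + gamma * Vstar s' - Q s a)).

Definition Pk_eps (k : nat) (x : X) : 'cV[R]_dim :=
  \sum_(y : X) Pbar_pow k x y *: eps y.

Definition gfun (x : X) : 'cV[R]_dim :=
  \col_i limn (fun N => \sum_(k < N) Pk_eps k x i 0).

Definition Pg (x : X) : 'cV[R]_dim := \sum_(y : X) Pbar x y *: gfun y.

Definition cov0l (l : nat) : 'M[R]_dim :=
  \sum_(x : X) mubar x *: (eps x *m (Pk_eps l x)^T).
Definition covl0 (l : nat) : 'M[R]_dim :=
  \sum_(x : X) mubar x *: (Pk_eps l x *m (eps x)^T).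

Definition Sigma_eps : 'M[R]_dim :=
  \matrix_(i, j) (cov0l 0 i j +
     limn (fun N => \sum_(1 <= l < N) (cov0l l i j + covl0 l i j))).

Definition Ginv : 'M[R]_dim := invmx Gmx.

Definition Sigma_inf : 'M[R]_dim := Ginv *m Sigma_eps *m Ginv^T.

Definition law (nu : X -> R) (k : nat) (y : X) : R :=
  \sum_(x : X) nu x * Pbar_pow k x y.

Definition Mdiff (nu : X -> R) (k : nat) : 'M[R]_dim :=
  \sum_(x : X) \sum_(y : X)
     (law nu k.-1 x * Pbar x y) *: ((gfun y - Pg x) *m (gfun y - Pg x)^T).

Definition Sigma_n (nu : X -> R) (n : nat) : 'M[R]_dim :=
  n%:R^-1 *: \sum_(1 <= k < n.+1) (Ginv *m Mdiff nu k *m Ginv^T).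

End MDP.

Definition chnorm (R : realType) (m n : nat) (M : 'M[R]_(m, n)) : R :=
  \big[Num.max/0]_(i < m) \big[Num.max/0]_(j < n) `|M i j|.

(* induced l_infty operator norm = maximum absolute row sum *)
Definition opnorm_inf (R : realType) (m n : nat) (M : 'M[R]_(m, n)) : R :=
  \big[Num.max/0]_(i < m) \sum_(j < n) `|M i j|.

From Pilot Require Import Defs.
From HB Require Import structures.
From mathcomp Require Import all_boot all_order all_algebra.
From mathcomp Require Import all_classical all_reals all_analysis.
From mathcomp Require Import ring lra.
Import Order.TTheory GRing.Theory Num.Theory.
Import numFieldNormedType.Exports.
Local Open Scope ring_scope.
Local Open Scope classical_set_scope.

(* The increment [g(z_k) - Pbar g(z_(k-1))] is a martingale difference whose conditional
   covariance given [z_(k-1) = x] is a function [cond_cov x] of the previous state only.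
   Under the stationary law its mean is the long-run covariance [Sigma_eps]: by the
   Poisson equation [g = eps + Pbar g], [E[g g^T - Pg Pg^T]] is exactly the sum of the
   lagged autocovariances of [eps]. Since [eps] is centred under [mubar], mixing makes
   [Pbar^k eps] decay like [4^-(k %/ tmix) / (1 - gamma)], so [g] and [cond_cov] are
   bounded by [O(tmix / (1 - gamma))] and [O(tmix^2 / (1 - gamma)^2)], while the law of
   [z_(k-1)] approaches [mubar] at the same geometric rate; summing these deviations
   over [k] costs one more factor [tmix]. Averaging over [n] steps and conjugating by
   [G^-1] gives the bound. *)

Lemma sum_geometric_le (R : realFieldType) (q : R) (M : nat) :
  0 <= q < 1 -> \sum_(i < M) q ^+ i <= (1 - q)^-1.
Proof.
case/andP => q0 q1; have q1' : 0 < 1 - q by rewrite subr_gt0.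
have qM : 0 <= q ^+ M by rewrite exprn_ge0.
have tele : (1 - q) * \sum_(i < M) q ^+ i = 1 - q ^+ M.
  by rewrite -[1 - q ^+ M]opprK opprB subrX1; ring.
by rewrite -(ler_pM2l q1') tele mulfV ?lt0r_neq0 // gerBl.
Qed.

Lemma sum_geometric_floor_le (R : realFieldType) (q : R) (t N : nat) :
  0 <= q < 1 -> (0 < t)%N -> \sum_(k < N) q ^+ (k %/ t) <= t%:R * (1 - q)^-1.
Proof.
move=> /[dup] /andP[q0 _] q01 t0.
have blocks M : \sum_(0 <= k < t * M) q ^+ (k %/ t) = t%:R * \sum_(i < M) q ^+ i.
  elim: M => [|M IH]; first by rewrite muln0 big_geq // big_ord0 mulr0.
  rewrite mulnS addnC (big_cat_nat _ (leq_addr _ _)) //= IH big_ord_recr /= mulrDr.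
  congr (_ + _); rewrite -{1}(add0n (t * M)%N) big_addn addKn big_mkord.
  under eq_bigr => i _ do rewrite addnC mulnC divnMDl // divn_small ?addn0 //.
  by rewrite sumr_const card_ord mulr_natl.
apply: (@le_trans _ _ (\sum_(0 <= k < t * N) q ^+ (k %/ t))).
  rewrite -(big_mkord xpredT (fun k => q ^+ (k %/ t))).
  rewrite (big_cat_nat _ (m := 0) (n := N) (p := t * N)) //=; last by rewrite leq_pmull.
  by rewrite lerDl sumr_ge0 // => k _; rewrite exprn_ge0.
by rewrite blocks ler_wpM2l // sum_geometric_le.
Qed.

Lemma cvg_sum (R : realType) (I : Type) (r : seq I) (f : I -> nat -> R) (a : I -> R) :
  (forall i, f i n @[n --> \oo] --> a i) ->
  \sum_(i <- r) f i n @[n --> \oo] --> \sum_(i <- r) a i.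
Proof. by move=> h; apply: cvg_big => //; exact: add_continuous. Qed.

Lemma abs_bounded_series_cvg (R : realType) (u : nat -> R) (B : R) :
  (forall N, \sum_(k < N) `|u k| <= B) ->
  cvgn (fun N => \sum_(k < N) u k) /\ `|limn (fun N => \sum_(k < N) u k)| <= B.
Proof.
move=> hB.
have -> : (fun N => \sum_(k < N) u k) = series u.
  by apply/funext => N; rewrite /series /= big_mkord.
have cvg_norm : cvgn [normed series u].
  apply: nondecreasing_is_cvgn.
    by apply: nondecreasing_series => n _ _; exact: normr_ge0.
  exists B => _ [N _ <-]; change (\sum_(0 <= k < N) `|u k| <= B); rewrite big_mkord; exact: hB.
have cvg_u : cvgn (series u) by exact: normed_cvg.
split => //; rewrite -lim_norm //; apply: limr_le; first exact: is_cvg_norm.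
by near=> m; rewrite /series /= big_mkord; apply: le_trans (ler_norm_sum _ _ _) (hB m).
Unshelve. all: by end_near.
Qed.

Lemma sub_mx_entry {R : zmodType} {m n : nat} (M N : 'M[R]_(m, n)) i j :
  (M - N) i j = M i j - N i j.
Proof. by rewrite !mxE. Qed.

Lemma mul_col_trmx_entry {R : pzRingType} {n : nat} (u v : 'cV[R]_n) i j :
  (u *m v^T) i j = u i 0 * v j 0.
Proof. by rewrite mxE big_ord1 mxE. Qed.

Lemma chnorm_le (R : realType) (m n : nat) (M : 'M[R]_(m, n)) (B : R) :
  0 <= B -> (forall i j, `|M i j| <= B) -> chnorm M <= B.
Proof. by move=> B0 hM; apply: bigmax_le => // i _; apply: bigmax_le. Qed.

Lemma row_sum_le_opnorm_inf {R : realType} {m n : nat} (M : 'M[R]_(m, n)) i :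
  \sum_j `|M i j| <= opnorm_inf M.
Proof. exact: (le_bigmax 0 (fun i => \sum_j `|M i j|) i). Qed.

Lemma sandwich_entry_le (R : realType) (m n : nat) (M : 'M[R]_(m, n)) (D : 'M[R]_n)
    (B : R) i j :
  0 <= B -> (forall a b, `|D a b| <= B) -> `|(M *m D *m M^T) i j| <= B * opnorm_inf M ^+ 2.
Proof.
move=> B0 hD; have rowi := row_sum_le_opnorm_inf M i; have rowj := row_sum_le_opnorm_inf M j.
have MDi b : `|(M *m D) i b| <= (\sum_a `|M i a|) * B.
  rewrite mxE mulr_suml; apply: le_trans (ler_norm_sum _ _ _) _.
  by apply: ler_sum => a _; rewrite normrM ler_wpM2l.
rewrite mxE; apply: le_trans (ler_norm_sum _ _ _) _.
apply: (@le_trans _ _ (\sum_b (\sum_a `|M i a|) * B * `|M j b|)).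
  by apply: ler_sum => b _; rewrite normrM [M^T b j]mxE ler_wpM2r.
rewrite -mulr_sumr [_ * B]mulrC -mulrA expr2 ler_wpM2l //.
by apply: ler_pM; rewrite ?sumr_ge0.
Qed.

Lemma sum_X (R : nmodType) (S A : finType) (F : X S A -> R) :
  \sum_(x : X S A) F x = \sum_(s : S) \sum_(a : A) \sum_(s' : S) F (s, a, s').
Proof. by rewrite pair_bigA /= pair_bigA /=; apply: eq_bigr => -[[s a] s'] _. Qed.

Lemma sum_indicator_mul {R : pzSemiRingType} {T : finType} (t0 : T) (c : T -> R) :
  \sum_(t : T) (t == t0)%:R * c t = c t0.
Proof. by rewrite (bigD1 t0) //= eqxx mul1r big1 ?addr0 // => t /negbTE ->; rewrite mul0r. Qed.

Lemma sum_abs_dtv (R : realType) (S A : finType) (p q : X S A -> R) :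
  \sum_y `|p y - q y| = 2 * dtv p q.
Proof. by rewrite /dtv mulrA mulfV ?mul1r // pnatr_eq0. Qed.

Lemma maxA_norm_le (R : realType) (A : finType) (f : A -> R) (M : R) :
  0 <= M -> (forall a, `|f a| <= M) -> `|Defs.maxA f| <= M.
Proof.
move=> M0 hf; rewrite /Defs.maxA; case: [pick a : A] => [a0|]; last by rewrite normr0.
have hfa a : - M <= f a <= M by rewrite -ler_norml.
rewrite ler_norml; apply/andP; split.
  by apply: le_trans (bigmax_ge_id _ _ _ _); case/andP: (hfa a0).
by apply: bigmax_le => [|a _]; [case/andP: (hfa a0) | case/andP: (hfa a)].
Qed.

Section LongRunCovariance.
Variables (R : realType) (S A : finType).
Variables (P : S -> A -> S -> R) (pib : S -> A -> R) (mu : S -> A -> R).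
Hypothesis P_ge0 : forall s a s', 0 <= P s a s'.
Hypothesis P_sum1 : forall s a, \sum_(s' : S) P s a s' = 1.
Hypothesis pib_ge0 : forall s a, 0 <= pib s a.
Hypothesis pib_sum1 : forall s, \sum_(a : A) pib s a = 1.
Hypothesis mu_invariant : forall s' a', mu s' a' =
  \sum_(s : S) \sum_(a : A) mu s a * P s a s' * pib s' a'.

Local Notation Pb := (Pbar P pib).
Local Notation Pbk := (Pbar_pow P pib).
Local Notation mub := (mubar P mu).

Lemma Pbar_ge0 x y : 0 <= Pb x y.
Proof. by case: x => [[s1 a1] s1']; case: y => [[s2 a2] s2'] /=; rewrite !mulr_ge0. Qed.

Lemma Pbar_sum1 x : \sum_y Pb x y = 1.
Proof.
case: x => [[s1 a1] s1']; rewrite sum_X /=.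
transitivity (\sum_s (s == s1')%:R * \sum_a \sum_s' pib s a * P s a s').
  apply: eq_bigr => s _; rewrite mulr_sumr; apply: eq_bigr => a _; rewrite mulr_sumr.
  by apply: eq_bigr => s' _; rewrite mulrA.
rewrite sum_indicator_mul -(pib_sum1 s1'); apply: eq_bigr => a _.
by rewrite -mulr_sumr P_sum1 mulr1.
Qed.

Lemma Pbar_powSr k x z : Pbk k.+1 x z = \sum_y Pbk k x y * Pb y z.
Proof. by []. Qed.

Lemma Pbar_powSl k x z : Pbk k.+1 x z = \sum_y Pb x y * Pbk k y z.
Proof.
elim: k z => [|k IH] z; rewrite Pbar_powSr.
  rewrite (bigD1 x) //= eqxx mul1r big1 ?addr0; last first.
    by move=> y /negbTE; rewrite eq_sym => ->; rewrite mul0r.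
  rewrite (bigD1 z) //= eqxx mulr1 big1 ?addr0 // => y /negbTE ->; exact: mulr0.
under eq_bigr do rewrite IH mulr_suml.
rewrite exchange_big; apply: eq_bigr => y _ /=.
by rewrite mulr_sumr; apply: eq_bigr => w _; rewrite mulrA.
Qed.

Lemma mubar_invariant y : \sum_x mub x * Pb x y = mub y.
Proof.
case: y => [[s2 a2] s2']; rewrite sum_X /= mu_invariant mulr_suml; apply: eq_bigr => s _.
rewrite mulr_suml; apply: eq_bigr => a _.
rewrite -(sum_indicator_mul s2 (fun s' => mu s a * P s a s' * pib s2 a2 * P s2 a2 s2')).
by apply: eq_bigr => s' _; rewrite [s2 == s']eq_sym; ring.
Qed.

Lemma mubar_invariant_sum (h : X S A -> R) :
  \sum_x mub x * \sum_y Pb x y * h y = \sum_y mub y * h y.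
Proof.
under eq_bigr do rewrite mulr_sumr.
rewrite exchange_big /=; apply: eq_bigr => y _.
by rewrite -mubar_invariant mulr_suml; apply: eq_bigr => x _; rewrite mulrA.
Qed.

Variables (r : S -> A -> R) (gamma : R) (Q : S -> A -> R).
Hypothesis r_bounded : forall s a, 0 <= r s a <= 1.
Hypothesis gamma_bounded : 0 < gamma < 1.
Hypothesis Q_bellman : forall s a,
  Q s a = r s a + gamma * \sum_(s' : S) P s a s' * Vstar Q s'.

Local Notation K := ((1 - gamma)^-1).
Local Notation ep := (eps r gamma Q).

Lemma K_gt0 : 0 < K.
Proof. by rewrite invr_gt0 subr_gt0; case/andP: gamma_bounded. Qed.

Lemma Qstar_norm_le s a : `|Q s a| <= K.
Proof.
have [g0 g1] := andP gamma_bounded.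
pose M := \big[Num.max/0]_(p : S * A) `|Q p.1 p.2|.
have M0 : 0 <= M by exact: bigmax_ge_id.
have Q_le_M s1 a1 : `|Q s1 a1| <= M.
  exact: (le_bigmax 0 (fun p : S * A => `|Q p.1 p.2|) (s1, a1)).
have Q_contract s1 a1 : `|Q s1 a1| <= 1 + gamma * M.
  rewrite Q_bellman; apply: le_trans (ler_normD _ _) _; apply: lerD.
    by case/andP: (r_bounded s1 a1) => r0 r1; rewrite ger0_norm.
  rewrite normrM (ger0_norm (ltW g0)) ler_wpM2l ?(ltW g0) //.
  apply: le_trans (ler_norm_sum _ _ _) _.
  apply: (@le_trans _ _ (\sum_(s' : S) P s1 a1 s' * M)).
    apply: ler_sum => s' _; rewrite normrM ger0_norm // ler_wpM2l //.
    exact: maxA_norm_le.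
  by rewrite -mulr_suml P_sum1 mul1r.
have M_contract : M <= 1 + gamma * M.
  apply: bigmax_le => [|p _]; last exact: Q_contract.
  by rewrite addr_ge0 // mulr_ge0 // ltW.
apply: le_trans (Q_le_M s a) _.
by rewrite -[_^-1]mul1r ler_pdivlMr ?subr_gt0 // mulrBr mulr1 mulrC; lra.
Qed.

Lemma Vstar_norm_le s : `|Vstar Q s| <= K.
Proof. by apply: maxA_norm_le; [exact: ltW K_gt0 | move=> a; exact: Qstar_norm_le]. Qed.

Lemma eps_norm_le x i : `|ep x i 0| <= 2 * K.
Proof.
have [g0 g1] := andP gamma_bounded.
case: x => [[s a] s']; rewrite /eps mxE normrM.
have td_le : `|r s a + gamma * Vstar Q s' - Q s a| <= 2 * K.
  have K1 : (1 - gamma) * K = 1 by rewrite mulfV // subr_eq0 gt_eqF.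
  have hQ := Qstar_norm_le s a; have hV := Vstar_norm_le s'.
  have target_le : `|r s a + gamma * Vstar Q s'| <= 1 + gamma * K.
    apply: le_trans (ler_normD _ _) _; apply: lerD.
      by case/andP: (r_bounded s a) => r0 r1; rewrite ger0_norm.
    by rewrite normrM (ger0_norm (ltW g0)) ler_wpM2l ?(ltW g0).
  by apply: le_trans (ler_normB _ _) _; nra.
rewrite -[X in _ <= X]mul1r; apply: ler_pM => //.
by case: (idx i == (s, a)); rewrite ?normr0 ?normr1.
Qed.

Lemma eps_mean_stationary i : \sum_x mub x * ep x i 0 = 0.
Proof.
rewrite sum_X big1 // => s _; rewrite big1 // => a _.
transitivity ((mu s a * (idx i == (s, a))%:R) *
  \sum_(s' : S) P s a s' * (r s a + gamma * Vstar Q s' - Q s a)).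
  by rewrite mulr_sumr; apply: eq_bigr => s' _; rewrite /= mxE; ring.
suff -> : \sum_(s' : S) P s a s' * (r s a + gamma * Vstar Q s' - Q s a) = 0 by rewrite mulr0.
under eq_bigr do rewrite mulrDr mulrN mulrDr mulrCA.
by rewrite !big_split /= sumrN -!mulr_suml -mulr_sumr P_sum1 Q_bellman; ring.
Qed.

Variable tmix : nat.
Hypothesis tmix_gt0 : (0 < tmix)%N.
Hypothesis mixing : forall (x : X S A) (t : nat),
  dtv (Pbk t x) mub <= (4^-1) ^+ (t %/ tmix).

Local Notation Pke := (Pk_eps r gamma P pib Q).
Local Notation gf := (gfun r gamma P pib Q).
Local Notation Pgf := (Pg r gamma P pib Q).

Lemma sum_quarter_floor_le N : \sum_(k < N) (4^-1 : R) ^+ (k %/ tmix) <= 2 * tmix%:R.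
Proof.
apply: le_trans (@sum_geometric_floor_le R 4^-1 tmix N _ tmix_gt0) _.
  by rewrite invr_ge0 ler0n invf_lt1 ?ltr1n.
have quarter : 4 * (4^-1 : R) = 1 by rewrite mulfV ?pnatr_eq0.
by rewrite mulrC ler_wpM2r // -div1r ler_pdivrMr; lra.
Qed.

Lemma Pk_eps_entry k x i : Pke k x i 0 = \sum_y Pbk k x y * ep y i 0.
Proof. by rewrite /Pk_eps summxE; apply: eq_bigr => y _; rewrite mxE. Qed.

Lemma Pk_eps0 x i : Pke 0 x i 0 = ep x i 0.
Proof.
rewrite Pk_eps_entry (bigD1 x) //= eqxx mul1r big1 ?addr0 //.
by move=> y /negbTE; rewrite eq_sym => ->; rewrite mul0r.
Qed.

(* Since the noise is centred under [mubar], [Pbar^k eps] only sees the distance of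
   [Pbar^k(x, .)] to [mubar]. *)
Lemma Pk_eps_norm_le k x i : `|Pke k x i 0| <= 4 * K * (4^-1) ^+ (k %/ tmix).
Proof.
rewrite Pk_eps_entry.
have -> : \sum_y Pbk k x y * ep y i 0 = \sum_y (Pbk k x y - mub y) * ep y i 0.
  by under [RHS]eq_bigr do rewrite mulrBl; rewrite sumrB eps_mean_stationary subr0.
apply: le_trans (ler_norm_sum _ _ _) _.
apply: (@le_trans _ _ (\sum_y `|Pbk k x y - mub y| * (2 * K))).
  by apply: ler_sum => y _; rewrite normrM ler_wpM2l // eps_norm_le.
rewrite -mulr_suml sum_abs_dtv.
have := mixing x k; have := K_gt0; set d := dtv _ _; set a := _ ^+ _ => K0 da.
rewrite (_ : 4 * K * a = (2 * a) * (2 * K)); last by ring.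
by rewrite ler_wpM2r ?ler_wpM2l // mulr_ge0 // ltW.
Qed.

Lemma gfun_series_bounded x i :
  cvgn (fun N => \sum_(k < N) Pke k x i 0) /\ `|gf x i 0| <= 8 * K * tmix%:R.
Proof.
have := @abs_bounded_series_cvg R (fun k => Pke k x i 0) (8 * K * tmix%:R).
rewrite /gfun mxE; apply => N.
apply: (@le_trans _ _ (\sum_(k < N) 4 * K * (4^-1) ^+ (k %/ tmix))).
  by apply: ler_sum => k _; exact: Pk_eps_norm_le.
rewrite -mulr_sumr (_ : 8 * K * tmix%:R = (4 * K) * (2 * tmix%:R)); last by ring.
by rewrite ler_wpM2l ?sum_quarter_floor_le // mulr_ge0 // ltW // K_gt0.
Qed.

Lemma gfun_cvg x i : (\sum_(k < N) Pke k x i 0) @[N --> \oo] --> gf x i 0.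
Proof. by rewrite /gfun mxE; case: (gfun_series_bounded x i). Qed.

Lemma gfun_norm_le x i : `|gf x i 0| <= 8 * K * tmix%:R.
Proof. by case: (gfun_series_bounded x i). Qed.

Lemma Pg_entry x i : Pgf x i 0 = \sum_y Pb x y * gf y i 0.
Proof. by rewrite /Pg summxE; apply: eq_bigr => y _; rewrite mxE. Qed.

Lemma Pg_norm_le x i : `|Pgf x i 0| <= 8 * K * tmix%:R.
Proof.
rewrite Pg_entry; apply: le_trans (ler_norm_sum _ _ _) _.
apply: (@le_trans _ _ (\sum_y Pb x y * (8 * K * tmix%:R))).
  by apply: ler_sum => y _; rewrite normrM ger0_norm ?Pbar_ge0 // ler_wpM2l ?Pbar_ge0 ?gfun_norm_le.
by rewrite -mulr_suml Pbar_sum1 mul1r.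
Qed.

(* [Pbar] maps the partial sums of [Pbar^k eps] up to [N] to those up to [N.+1] minus [eps]. *)
Lemma poisson_equation x i : gf x i 0 = ep x i 0 + Pgf x i 0.
Proof.
pose s y N := \sum_(k < N) Pke k y i 0.
have shift N : \sum_y Pb x y * s y N = s x N.+1 - ep x i 0.
  rewrite /s big_ord_recl /= Pk_eps0 [ep x i 0 + _]addrC addrK.
  under eq_bigr do rewrite mulr_sumr.
  rewrite exchange_big /=; apply: eq_bigr => k _.
  rewrite Pk_eps_entry; under [RHS]eq_bigr do rewrite Pbar_powSl mulr_suml.
  rewrite exchange_big /=; apply: eq_bigr => y _.
  by rewrite Pk_eps_entry mulr_sumr; apply: eq_bigr => z _; rewrite mulrA.
have to_Pg : (\sum_y Pb x y * s y N) @[N --> \oo] --> Pgf x i 0.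
  by rewrite Pg_entry; apply: cvg_sum => y; apply: cvgMl_tmp; exact: gfun_cvg.
have to_g : (\sum_y Pb x y * s y N) @[N --> \oo] --> gf x i 0 - ep x i 0.
  under eq_fun do rewrite shift.
  apply: cvgB; last exact: cvg_cst.
  by rewrite (cvg_shiftS (fun N => s x N)); exact: gfun_cvg.
move/(cvg_lim (@Rhausdorff R)): to_g; rewrite (cvg_lim (@Rhausdorff R) to_Pg) => ->.
by rewrite addrC subrK.
Qed.

Local Notation Se := (Sigma_eps r gamma P pib mu Q).

Lemma cov0l_entry l i j : cov0l r gamma P pib mu Q l i j = \sum_x mub x * (ep x i 0 * Pke l x j 0).
Proof. by rewrite /cov0l summxE; apply: eq_bigr => x _; rewrite mxE mul_col_trmx_entry. Qed.

Lemma covl0_entry l i j : covl0 r gamma P pib mu Q l i j = \sum_x mub x * (Pke l x i 0 * ep x j 0).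
Proof. by rewrite /covl0 summxE; apply: eq_bigr => x _; rewrite mxE mul_col_trmx_entry. Qed.

(* Summing the autocovariances up to lag N produces [E[eps_0 g_N^T + g_N eps_0^T]]
   with [g_N] the partial sums of [g]; the Poisson equation then turns the limit into
   [E[g g^T - Pg Pg^T]]. *)
Lemma Sigma_eps_entry i j :
  Se i j = \sum_x mub x * (gf x i 0 * gf x j 0 - Pgf x i 0 * Pgf x j 0).
Proof.
rewrite /Sigma_eps mxE.
pose f l := cov0l r gamma P pib mu Q l i j + covl0 r gamma P pib mu Q l i j.
pose L := \sum_x mub x * (ep x i 0 * gf x j 0 + gf x i 0 * ep x j 0).
pose T N := \sum_(0 <= l < N) f l.
have to_L : T @ \oo --> L.
  have -> : T = (fun N => \sum_x mub x * (ep x i 0 * \sum_(k < N) Pke k x j 0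
                                   + (\sum_(k < N) Pke k x i 0) * ep x j 0)).
    apply/funext => N; rewrite /T /f big_mkord.
    under eq_bigr => l _ do rewrite cov0l_entry covl0_entry -big_split.
    rewrite exchange_big /=; apply: eq_bigr => x _.
    by rewrite mulr_sumr mulr_suml -big_split mulr_sumr; apply: eq_bigr => k _; rewrite mulrDr.
  apply: cvg_sum => x; apply: cvgMl_tmp.
  by apply: cvgD; [apply: cvgMl_tmp | apply: cvgMr_tmp]; exact: gfun_cvg.
have to_L1 : (\sum_(1 <= l < N) f l) @[N --> \oo] --> L - f 0%N.
  rewrite -(cvg_shiftS (fun N => \sum_(1 <= l < N) f l)).
  have -> : (fun N => \sum_(1 <= l < N.+1) f l) = (fun N => T N.+1 - f 0%N).
    by apply/funext => N; rewrite /T big_add1 big_nat_recl //= [f 0%N + _]addrC addrK.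
  by apply: cvgB; [rewrite (cvg_shiftS T) | exact: cvg_cst].
rewrite (cvg_lim (@Rhausdorff R) to_L1) /f.
have -> : forall a b c : R, a + (c - (a + b)) = c - b by move=> a b c; ring.
rewrite /L covl0_entry -sumrB; apply: eq_bigr => x _.
by rewrite !poisson_equation Pk_eps0; ring.
Qed.

Definition cond_cov x i j :=
  \sum_y Pb x y * ((gf y i 0 - Pgf x i 0) * (gf y j 0 - Pgf x j 0)).

Lemma cond_covE x i j :
  cond_cov x i j = \sum_y Pb x y * (gf y i 0 * gf y j 0) - Pgf x i 0 * Pgf x j 0.
Proof.
have expand y : Pb x y * ((gf y i 0 - Pgf x i 0) * (gf y j 0 - Pgf x j 0)) =
    Pb x y * (gf y i 0 * gf y j 0) - Pgf x i 0 * (Pb x y * gf y j 0)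
    - Pgf x j 0 * (Pb x y * gf y i 0) + Pgf x i 0 * Pgf x j 0 * Pb x y by ring.
rewrite /cond_cov; under eq_bigr do rewrite expand.
by rewrite !big_split /= !sumrN -!mulr_sumr -!Pg_entry Pbar_sum1; ring.
Qed.

Lemma cond_cov_mean_stationary i j : \sum_x mub x * cond_cov x i j = Se i j.
Proof.
rewrite Sigma_eps_entry.
under eq_bigr => x _ do rewrite cond_covE mulrBr.
by rewrite sumrB mubar_invariant_sum -sumrB; apply: eq_bigr => x _; rewrite mulrBr.
Qed.

Lemma cond_cov_norm_le x i j : `|cond_cov x i j| <= 256 * K ^+ 2 * tmix%:R ^+ 2.
Proof.
have incr_le y i0 : `|gf y i0 0 - Pgf x i0 0| <= 16 * K * tmix%:R.
  apply: le_trans (ler_normB _ _) _.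
  by have := gfun_norm_le y i0; have := Pg_norm_le x i0; lra.
rewrite /cond_cov; apply: le_trans (ler_norm_sum _ _ _) _.
apply: (@le_trans _ _ (\sum_y Pb x y * (256 * K ^+ 2 * tmix%:R ^+ 2))).
  apply: ler_sum => y _; rewrite normrM ger0_norm ?Pbar_ge0 // ler_wpM2l ?Pbar_ge0 //.
  rewrite normrM (_ : 256 * K ^+ 2 * tmix%:R ^+ 2 = (16 * K * tmix%:R) * (16 * K * tmix%:R)); last by ring.
  by apply: ler_pM => //; apply: incr_le.
by rewrite -mulr_suml Pbar_sum1 mul1r.
Qed.

Variables (pistar : S -> A) (nu : X S A -> R).
Hypothesis nu_ge0 : forall x, 0 <= nu x.
Hypothesis nu_sum1 : \sum_x nu x = 1.

Local Notation law_nu := (law P pib nu).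
Local Notation Md := (Mdiff r gamma P pib Q nu).
Local Notation Gi := (Ginv gamma P mu pistar).

Lemma law_sub_mubar_norm_le t :
  \sum_y `|law_nu t y - mub y| <= 2 * (4^-1) ^+ (t %/ tmix).
Proof.
have law_sub y : law_nu t y - mub y = \sum_x nu x * (Pbk t x y - mub y).
  by under eq_bigr do rewrite mulrBr; rewrite sumrB -mulr_suml nu_sum1 mul1r.
apply: (@le_trans _ _ (\sum_y \sum_x nu x * `|Pbk t x y - mub y|)).
  apply: ler_sum => y _; rewrite law_sub; apply: le_trans (ler_norm_sum _ _ _) _.
  by apply: ler_sum => x _; rewrite normrM ger0_norm.
rewrite exchange_big /=.
apply: (@le_trans _ _ (\sum_x nu x * (2 * (4^-1) ^+ (t %/ tmix)))).
  by apply: ler_sum => x _; rewrite -mulr_sumr ler_wpM2l // sum_abs_dtv ler_wpM2l.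
by rewrite -mulr_suml nu_sum1 mul1r.
Qed.

Lemma Mdiff_entry k i j : Md k i j = \sum_x law_nu k.-1 x * cond_cov x i j.
Proof.
rewrite /Mdiff summxE; apply: eq_bigr => x _; rewrite [LHS]summxE /cond_cov mulr_sumr.
by apply: eq_bigr => y _; rewrite mxE mul_col_trmx_entry !mxE -mulrA.
Qed.

Lemma Mdiff_sub_Sigma_eps_norm_le k i j :
  `|Md k i j - Se i j| <= 2 * (4^-1) ^+ (k.-1 %/ tmix) * (256 * K ^+ 2 * tmix%:R ^+ 2).
Proof.
rewrite Mdiff_entry -cond_cov_mean_stationary -sumrB.
under eq_bigr do rewrite -mulrBl.
apply: le_trans (ler_norm_sum _ _ _) _.
apply: (@le_trans _ _
  (\sum_x `|law_nu k.-1 x - mub x| * (256 * K ^+ 2 * tmix%:R ^+ 2))).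
  by apply: ler_sum => x _; rewrite normrM ler_wpM2l // cond_cov_norm_le.
rewrite -mulr_suml ler_wpM2r ?law_sub_mubar_norm_le //.
by rewrite !mulr_ge0 ?exprn_ge0 // ltW // K_gt0.
Qed.

Lemma Sigma_n_sub_Sigma_inf n : (0 < n)%N ->
  Sigma_n r gamma P pib mu Q pistar nu n - Sigma_inf r gamma P pib mu Q pistar =
  Gi *m (n%:R^-1 *: \sum_(1 <= k < n.+1) (Md k - Se)) *m Gi^T.
Proof.
move=> n_gt0; rewrite /Sigma_n /Sigma_inf sumrB sumr_const_nat subn1 /=.
rewrite scalerBr -(scaler_nat n Se) scalerA mulVf ?pnatr_eq0 -?lt0n // scale1r.
rewrite mulmxBr mulmxBl -scalemxAr -scalemxAl mulmx_sumr mulmx_suml.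
by congr (_ *: _ - _); apply: eq_bigr => k _; rewrite mulmxA.
Qed.

(* The geometric decay in [k.-1 %/ tmix] sums to [O(tmix)]: this is the third factor
   of [tmix]. *)
Lemma mean_Mdiff_sub_Sigma_eps_norm_le n a b :
  `|(n%:R^-1 *: \sum_(1 <= k < n.+1) (Md k - Se)) a b|
     <= n%:R^-1 * (1024 * K ^+ 2 * tmix%:R ^+ 3).
Proof.
rewrite mxE summxE normrM ger0_norm ?invr_ge0 // ler_wpM2l ?invr_ge0 //.
apply: le_trans (ler_norm_sum _ _ _) _.
apply: (@le_trans _ _ (\sum_(1 <= k < n.+1)
   2 * (4^-1) ^+ (k.-1 %/ tmix) * (256 * K ^+ 2 * tmix%:R ^+ 2))).
  by apply: ler_sum => k _; rewrite sub_mx_entry; exact: Mdiff_sub_Sigma_eps_norm_le.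
rewrite -mulr_suml big_add1 /= big_mkord -mulr_sumr.
rewrite (_ : 1024 * K ^+ 2 * tmix%:R ^+ 3 =
             2 * (2 * tmix%:R) * (256 * K ^+ 2 * tmix%:R ^+ 2)); last by ring.
rewrite ler_wpM2r ?ler_wpM2l ?sum_quarter_floor_le //.
by rewrite !mulr_ge0 ?exprn_ge0 // ltW // K_gt0.
Qed.

Lemma Sigma_n_error_le n : (0 < n)%N ->
  chnorm (Sigma_n r gamma P pib mu Q pistar nu n - Sigma_inf r gamma P pib mu Q pistar)
  <= 1024%N%:R * opnorm_inf Gi ^+ 2 * tmix%:R ^+ 3 / (n%:R * (1 - gamma) ^+ 2).
Proof.
move=> n_gt0; have [g0 g1] := andP gamma_bounded.
(* Closed by hand: [done] would try to evaluate the unary numeral in [0 <= 1024]. *)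
have B0 : 0 <= n%:R^-1 * (1024 * K ^+ 2 * tmix%:R ^+ 3).
  apply: mulr_ge0; first by rewrite invr_ge0 ler0n.
  apply: mulr_ge0; last exact/exprn_ge0/ler0n.
  by apply: mulr_ge0; [exact: ler0n | exact: sqr_ge0].
rewrite Sigma_n_sub_Sigma_inf //.
have -> : forall o : R, 1024%N%:R * o ^+ 2 * tmix%:R ^+ 3 / (n%:R * (1 - gamma) ^+ 2)
    = n%:R^-1 * (1024 * K ^+ 2 * tmix%:R ^+ 3) * o ^+ 2.
  move=> o; rewrite exprVn; field.
  by rewrite pnatr_eq0 -lt0n n_gt0 subr_eq0 gt_eqF.
apply: chnorm_le => [|i j]; first by apply: mulr_ge0; last exact: sqr_ge0.
by apply: sandwich_entry_le B0 _ => a b; exact: mean_Mdiff_sub_Sigma_eps_norm_le.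
Qed.

End LongRunCovariance.

Theorem lemmaB6 :
  exists C : nat,
  forall (R : realType) (S A : finType)
    (r : S -> A -> R) (gamma : R) (P : S -> A -> S -> R)
    (pib : S -> A -> R) (mu : S -> A -> R) (Q : S -> A -> R)
    (pistar : S -> A) (tmix : nat) (nu : X S A -> R) (n : nat),
  (* (A1): deterministic reward in [0,1], discount in (0,1), transition kernel *)
  (forall s a, 0 <= r s a <= 1) ->
  0 < gamma < 1 ->
  (forall s a s', 0 <= P s a s') ->
  (forall s a, \sum_(s' : S) P s a s' = 1) ->
  (* behavior policy *)
  (forall s a, 0 <= pib s a) ->
  (forall s, \sum_(a : A) pib s a = 1) ->
  (* mu: stationary law of (s_t, a_t), with min mu > 0 *)
  (forall s a, 0 < mu s a) ->
  \sum_(s : S) \sum_(a : A) mu s a = 1 ->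
  (forall s' a', mu s' a' =
     \sum_(s : S) \sum_(a : A) mu s a * P s a s' * pib s' a') ->
  (* Q = Q*: the optimal Q-function (Bellman optimality equation) *)
  (forall s a, Q s a = r s a + gamma * \sum_(s' : S) P s a s' * Vstar Q s') ->
  (* (A4): unique optimal deterministic policy pistar, positive gap *)
  (forall s a, a != pistar s -> Q s a < Q s (pistar s)) ->
  (* (A2): mixing of the chain zbar *)
  (0 < tmix)%N ->
  (forall (x : X S A) (t : nat),
     dtv (Pbar_pow P pib t x) (mubar P mu) <= (4^-1) ^+ (t %/ tmix)) ->
  (* arbitrary initial distribution of zbar_0 *)
  (forall x, 0 <= nu x) -> \sum_(x : X S A) nu x = 1 ->
  (0 < n)%N ->
  chnorm (Sigma_n r gamma P pib mu Q pistar nu n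
          - Sigma_inf r gamma P pib mu Q pistar)
  <= C%:R * (opnorm_inf (Ginv gamma P mu pistar)) ^+ 2 * (tmix%:R) ^+ 3
       / (n%:R * (1 - gamma) ^+ 2).
Proof.
exists 1024%N => R S A r gamma P pib mu Q pistar tmix nu n r_bounded gamma_bounded P_ge0 P_sum1
  pib_ge0 pib_sum1 _ _ mu_invariant Q_bellman _ tmix_gt0 mixing nu_ge0 nu_sum1 n_gt0.
exact: Sigma_n_error_le.
Qed.
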